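(* Let $R_t\in\mathbb R^{K\times K}$ and $M_t\in\mathbb R^{d\times d}$ be symmetric positive definite, $G_t\in\mathbb R^{K\times d}$, $r_t^\star,\varepsilon_t^\theta\in\mathbb R^K$, $r_t=r_t^\star-\varepsilon_t^\theta$, and $\ell_t(u;r)=\frac12\|r-G_tu\|^2_{R_t^{-1}}$. Assume $\|\varepsilon_t^\theta\|_{R_t^{-1}}\le B_t^\theta$ and $G_t^\top R_t^{-1}G_t\preceq\alpha_tM_t$ for some $B_t^\theta\ge0$, $\alpha_t\ge0$. Then for every pair $m,v\in\mathbb R^d$, $$\ell_t(m;r_t)-\ell_t(v;r_t)\le\ell_t(m;r_t^\star)-\ell_t(v;r_t^\star)+\frac{\alpha_t}{2}\|m-v\|^2_{M_t}+\frac12(B_t^\theta)^2.$$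
   Context: $\|a\|^2_{M}=a^\top Ma$; $\preceq$ is the Loewner order. In the application, $M_t$ is the pre-update precision of the discrepancy state, $r_t^\star$ the residual against the oracle projected simulator anchor, $\varepsilon_t^\theta$ the anchor error, and $r_t$ the residual used by the discrepancy update. *)

From HB Require Import structures.
From mathcomp Require Import all_boot all_order all_algebra.
Set Implicit Arguments. Unset Strict Implicit. Unset Printing Implicit Defensive.
Import Order.TTheory GRing.Theory Num.Theory.
Local Open Scope ring_scope.

Definition sqnorm (R : realFieldType) (n : nat) (M : 'M[R]_n) (a : 'cV[R]_n) : R :=
  ((a^T *m M *m a) 0 0).

Definition spd (R : realFieldType) (n : nat) (M : 'M[R]_n) : Prop :=
  M^T = M /\ forall x : 'cV[R]_n, x != 0 -> 0 < sqnorm M x.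

Definition loewner_le (R : realFieldType) (n : nat) (A B : 'M[R]_n) : Prop :=
  forall x : 'cV[R]_n, 0 <= sqnorm (B - A) x.

Definition ell (R : realFieldType) (K d : nat) (Rt : 'M[R]_K) (G : 'M[R]_(K, d))
  (u : 'cV[R]_d) (r : 'cV[R]_K) : R :=
  2^-1 * sqnorm (invmx Rt) (r - G *m u).

From HB Require Import structures.
From mathcomp Require Import all_boot all_order all_algebra.
From mathcomp Require Import lra.
Import Order.TTheory GRing.Theory Num.Theory.
Set Implicit Arguments. Unset Strict Implicit.
Local Open Scope ring_scope.

(* Expanding the square, replacing r* by r* - eps changes the loss at u by
   -<eps, r* - G u> + |eps|^2/2 in the R^-1 inner product, so the two loss
   differences differ by the cross term <eps, G (m - v)>.  Since R^-1 is
   positive semidefinite, 2<a, b> <= |a|^2 + |b|^2; with |G w|^2 <= alpha |w|_M^2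
   (the Loewner bound) and |eps|^2 <= B^2 this bounds the cross term. *)

Definition mxform (R : comNzRingType) (n : nat) (P : 'M[R]_n) (x y : 'cV[R]_n) : R :=
  (x^T *m P *m y) 0 0.

Section BilinearForm.

Variables (R : comNzRingType) (n : nat) (P : 'M[R]_n).

Lemma mxformBl x y z : mxform P (x - y) z = mxform P x z - mxform P y z.
Proof. by rewrite /mxform linearB /= !mulmxBl !mxE. Qed.

Lemma mxformBr x y z : mxform P x (y - z) = mxform P x y - mxform P x z.
Proof. by rewrite /mxform mulmxBr !mxE. Qed.

Lemma mxformC x y : P^T = P -> mxform P x y = mxform P y x.
Proof.
move=> symP; rewrite /mxform.
transitivity ((x^T *m P *m y)^T 0 0); first by rewrite [RHS]mxE.
by rewrite !trmx_mul trmxK symP mulmxA.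
Qed.

End BilinearForm.

Section QuadraticForm.

Variables (R : realFieldType) (n : nat).

Lemma sqnormB (P : 'M[R]_n) x y : P^T = P ->
  sqnorm P (x - y) = sqnorm P x - 2 * mxform P x y + sqnorm P y.
Proof.
move=> symP; rewrite /sqnorm -!/(mxform _ _ _) mxformBl !mxformBr.
by rewrite (mxformC y x symP); lra.
Qed.

Lemma mxform_le_sqnorm (P : 'M[R]_n) x y : P^T = P ->
  (forall z, 0 <= sqnorm P z) -> 2 * mxform P x y <= sqnorm P x + sqnorm P y.
Proof. by move=> symP psdP; have := psdP (x - y); rewrite sqnormB //; lra. Qed.

Lemma sqnorm_mulmx m (P : 'M[R]_m) (G : 'M[R]_(m, n)) w :
  sqnorm P (G *m w) = sqnorm (G^T *m P *m G) w.
Proof. by rewrite /sqnorm trmx_mul !mulmxA. Qed.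

Lemma sqnormZ (a : R) (M : 'M[R]_n) x : sqnorm (a *: M) x = a * sqnorm M x.
Proof. by rewrite /sqnorm -scalemxAr -scalemxAl mxE. Qed.

Lemma loewner_le_sqnorm (A B : 'M[R]_n) x :
  loewner_le A B -> sqnorm A x <= sqnorm B x.
Proof.
by move=> /(_ x); rewrite /sqnorm mulmxBr mulmxBl !mxE subr_ge0.
Qed.

Lemma spd_sqnorm_ge0 (M : 'M[R]_n) x : spd M -> 0 <= sqnorm M x.
Proof.
case=> _ posM; have [->|x_neq0] := eqVneq x 0; last exact/ltW/posM.
by rewrite /sqnorm mulmx0 mxE.
Qed.

Lemma spd_trmx_invmx (M : 'M[R]_n) : spd M -> (invmx M)^T = invmx M.
Proof. by case=> symM _; rewrite trmx_inv symM. Qed.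

(* For a singular [M], [invmx M = M]; otherwise write [x = M y]. *)
Lemma spd_sqnorm_invmx_ge0 (M : 'M[R]_n) x : spd M -> 0 <= sqnorm (invmx M) x.
Proof.
move=> spdM; have [unitM|] := boolP (M \in unitmx); last first.
  by move=> nunitM; rewrite invmx_out ?inE //; apply: spd_sqnorm_ge0.
have -> : sqnorm (invmx M) x = sqnorm M (invmx M *m x).
  rewrite /sqnorm trmx_mul (spd_trmx_invmx spdM) -!mulmxA.
  by rewrite (mulmxA M) mulmxV // mul1mx.
exact: spd_sqnorm_ge0.
Qed.

End QuadraticForm.

Lemma ell_subr (R : realFieldType) (K d : nat) (Rt : 'M[R]_K) (G : 'M[R]_(K, d))
    u r e : (invmx Rt)^T = invmx Rt ->
  ell Rt G u (r - e)
  = ell Rt G u r - mxform (invmx Rt) e (r - G *m u) + 2^-1 * sqnorm (invmx Rt) e.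
Proof.
move=> symP; rewrite /ell addrAC sqnormB // (mxformC _ _ symP); lra.
Qed.

Theorem corollary2 (R : realFieldType) (K d : nat)
  (Rt : 'M[R]_K) (Mt : 'M[R]_d) (Gt : 'M[R]_(K, d))
  (rstar eps : 'cV[R]_K) (B alpha : R) :
  spd Rt -> spd Mt ->
  0 <= B -> 0 <= alpha ->
  sqnorm (invmx Rt) eps <= B ^+ 2 ->
  loewner_le (Gt^T *m invmx Rt *m Gt) (alpha *: Mt) ->
  forall m v : 'cV[R]_d,
    ell Rt Gt m (rstar - eps) - ell Rt Gt v (rstar - eps)
    <= ell Rt Gt m rstar - ell Rt Gt v rstar
       + alpha / 2 * sqnorm Mt (m - v) + 2^-1 * B ^+ 2.
Proof.
move=> spdR _ _ _ epsB GM m v.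
set P := invmx Rt; have symP : P^T = P := spd_trmx_invmx spdR.
rewrite !ell_subr //.
have cross : mxform P eps (rstar - Gt *m v) - mxform P eps (rstar - Gt *m m)
    = mxform P eps (Gt *m (m - v)).
  by rewrite -mxformBr mulmxBr opprB addrC addrA subrK.
have cauchy := mxform_le_sqnorm eps (Gt *m (m - v)) symP
  (fun z => spd_sqnorm_invmx_ge0 z spdR).
have GwM := loewner_le_sqnorm (m - v) GM.
rewrite sqnormZ -sqnorm_mulmx -/P in GwM.
lra.
Qed.
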